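(* Let $n$ be a positive integer and let $Cl$ be a clique (complete graph) on $\sqrt{n}$ nodes, whose edges carry local port labels at each endpoint. Suppose each node of $Cl$ has a whiteboard of $O(\log n)$ bits of storage and two mobile agents, each with $O(\log n)$ bits of memory, operate in $Cl$. Then the two agents cannot construct the map of $Cl$.
   Context: Constructing the map of a graph means that the agents compute (store) a copy of the graph including all of its port labels. Agents can read and write the whiteboards of the nodes they visit; the only storage available is the agents' memory and the nodes' whiteboards. *)

From mathcomp Require Import all_boot.
Set Implicit Arguments. Unset Strict Implicit. Unset Printing Implicit Defensive.

(* A port labeling assigns to
   each node u a bijection from its local ports 'I_(k.-1) onto the other
   k-1 nodes: [pl u i] is the neighbour reached from u through port i. *)
Definition port_labeling (k : nat) := 'I_k -> 'I_k.-1 -> 'I_k.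

Definition valid_labeling k (pl : port_labeling k) : Prop :=
  forall u : 'I_k, injective (pl u) /\ (forall i, pl u i != u).

(* Isomorphism of port-labeled cliques: a renaming of nodes preserving
   all port labels.  A "copy of the graph including all port labels" is
   a port-labeled graph isomorphic to the original. *)
Definition pl_iso k (pl1 pl2 : port_labeling k) : Prop :=
  exists s : 'I_k -> 'I_k, bijective s /\
    forall u i, pl2 (s u) i = s (pl1 u i).

(* Global storage of the system: the memories of the two agents and the
   whiteboards of the k nodes, each a bit string. *)
Definition config (k : nat) := (('I_2 -> seq bool) * ('I_k -> seq bool))%type.

Definition fits k (B : nat) (C : config k) : Prop :=
  (forall a, size (C.1 a) <= B) /\ (forall v, size (C.2 v) <= B).

(* Storage bound c * log n bits (log taken as trunc_log 2 n + 1 >= 1). *)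
Definition bits (c n : nat) : nat := c * (trunc_log 2 n).+1.

(* An algorithm run by the two agents, on every port labeling of the clique,
   ends in a final storage configuration [F pl]. *)
Definition constructs_map k (B : nat) (F : port_labeling k -> config k) : Prop :=
  exists decode : config k -> port_labeling k,
    forall pl, valid_labeling pl ->
      fits B (F pl) /\ pl_iso pl (decode (F pl)).

(* Choosing at every node an arbitrary permutation of its ports onto the
   other k - 1 nodes gives ((k-1)!)^k distinct port labelings of the clique on
   k nodes.  Since the decoded map is a copy only up to a renaming of the nodes,
   each labeling is determined by the final storage contents (at most
   ((B+1) 2^B)^(k+2) possibilities with B bits per agent and per whiteboard)
   together with that renaming (k! possibilities).  For B = O(log k) this is
   2^O(k log k) possibilities, far fewer than ((k-1)!)^k = 2^Omega(k^2 log k). *)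

From mathcomp Require Import all_boot perm zify.
From Stdlib Require Import FunctionalExtensionality.

Set Implicit Arguments. Unset Strict Implicit. Unset Printing Implicit Defensive.

Section BitEncoding.

Variable B : nat.

Definition encode_bits (s : seq bool) : 'I_B.+1 * {ffun 'I_B -> bool} :=
  (inord (size s), [ffun i : 'I_B => nth false s i]).

Lemma encode_bits_inj s1 s2 : size s1 <= B -> size s2 <= B ->
  encode_bits s1 = encode_bits s2 -> s1 = s2.
Proof.
move=> s1_le s2_le [] /(congr1 (@nat_of_ord _)).
rewrite !inordK ?ltnS // => eq_size /ffunP eq_nth.
apply: (eq_from_nth (x0 := false) eq_size) => i i_lt.
have i_ltB : i < B by apply: leq_trans s1_le.
by have := eq_nth (Ordinal i_ltB); rewrite !ffunE.
Qed.

Definition encode_config k (C : config k) :=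
  ([ffun a => encode_bits (C.1 a)], [ffun v => encode_bits (C.2 v)]).

Lemma encode_config_inj k (C1 C2 : config k) : fits B C1 -> fits B C2 ->
  encode_config C1 = encode_config C2 -> C1 = C2.
Proof.
case: C1 C2 => [m1 w1] [m2 w2] [/= m1_le w1_le] [/= m2_le w2_le].
case=> /ffunP eq_m /ffunP eq_w.
congr pair; apply: functional_extensionality => x.
  by apply: encode_bits_inj; have := eq_m x; rewrite !ffunE.
by apply: encode_bits_inj; have := eq_w x; rewrite !ffunE.
Qed.

End BitEncoding.

Section Renaming.

Variable k : nat.

Definition iso_by (pl1 pl2 : port_labeling k) (s : {perm 'I_k}) : bool :=
  [forall u, forall i, pl2 (s u) i == s (pl1 u i)].

Lemma pl_isoP (pl1 pl2 : port_labeling k) : pl_iso pl1 pl2 -> exists s, iso_by pl1 pl2 s.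
Proof.
case=> s [/bij_inj s_inj iso_s]; exists (perm s_inj).
by apply/forallP => u; apply/forallP => i; rewrite !permE iso_s.
Qed.

Lemma iso_by_inj (pl1 pl1' pl2 : port_labeling k) s :
  iso_by pl1 pl2 s -> iso_by pl1' pl2 s -> pl1 = pl1'.
Proof.
move=> /forallP iso1 /forallP iso1'.
apply: functional_extensionality => u; apply: functional_extensionality => i.
apply: (@perm_inj _ s).
by move: (iso1 u) (iso1' u) => /forallP/(_ i)/eqP <- /forallP/(_ i)/eqP <-.
Qed.

End Renaming.

Section Counting.

Variables (k B : nat) (F : port_labeling k -> config k).
Variables (T : finType) (f : T -> port_labeling k).
Hypotheses (F_map : constructs_map B F) (f_valid : forall t, valid_labeling (f t)).
Hypothesis f_inj : injective f.

Lemma card_le_constructs_map :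
  #|T| <= (B.+1 * 2 ^ B) ^ 2 * (B.+1 * 2 ^ B) ^ k * k`!.
Proof.
case: F_map => decode F_decode.
pose rename t := odflt 1%g [pick s | iso_by (f t) (decode (F (f t))) s].
have rename_iso t : iso_by (f t) (decode (F (f t))) (rename t).
  rewrite /rename; case: pickP => [//|no_iso].
  by have [s] := pl_isoP (F_decode _ (f_valid t)).2; rewrite no_iso.
pose code t := (encode_config B (F (f t)), rename t).
have code_inj : injective code.
  move=> t1 t2 eq_code; apply: f_inj.
  move: (congr1 fst eq_code) (congr1 snd eq_code) => /= eq_enc eq_rename.
  have eq_F : F (f t1) = F (f t2).
    by apply: (encode_config_inj _ _ eq_enc); apply: (F_decode _ (f_valid _)).1.
  by apply: (iso_by_inj (rename_iso t1)); rewrite eq_F eq_rename.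
have := leq_card code code_inj.
rewrite !card_prod !card_ffun !card_prod !card_ord.
by rewrite card_ffun card_bool card_ord card_Sn.
Qed.

End Counting.

Definition perm_labeling k (g : {ffun 'I_k -> {perm 'I_k.-1}}) : port_labeling k :=
  fun u i => lift u (g u i).

Lemma perm_labeling_valid k (g : {ffun 'I_k -> {perm 'I_k.-1}}) :
  valid_labeling (perm_labeling g).
Proof.
move=> u; split; first by move=> i j /lift_inj/perm_inj.
by move=> i; rewrite eq_sym neq_lift.
Qed.

Lemma perm_labeling_inj k : injective (@perm_labeling k).
Proof.
move=> g1 g2 eq_pl; apply/ffunP => u; apply/permP => i.
by apply: (@lift_inj _ u); have := congr1 (fun pl => pl u i) eq_pl.
Qed.

Lemma expn_leq_fact a n : a ^ n <= (a + n)`!.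
Proof.
elim: n => [|n IHn]; first by rewrite expn0 fact_gt0.
by rewrite addnS factS expnS leq_mul // leqW // leq_addr.
Qed.

Lemma leq_exp2rW m n e : m <= n -> m ^ e <= n ^ e.
Proof. by case: e => // e; rewrite leq_exp2r. Qed.

Lemma fact_leq_expn n : n`! <= n ^ n.
Proof.
elim: n => // n IHn; rewrite factS expnS leq_mul //.
exact: leq_trans IHn (leq_exp2rW _ _).
Qed.

(* With a := k/2 we have k <= a^2, and (k-1)! >= a^(k-1-a) where the
   exponent k - 1 - a exceeds 2(d+1). *)
Lemma expn_lt_fact_predn d k : 4 * d + 8 <= k -> k ^ d.+1 < (k.-1)`!.
Proof.
move=> k_ge; set a := k %/ 2.
have k_le_a2 : k <= a ^ 2 by rewrite /a; nia.
have -> : k.-1 = a + (k.-1 - a) by rewrite /a; lia.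
apply: leq_trans (expn_leq_fact _ _).
apply: (@leq_ltn_trans ((a ^ 2) ^ d.+1)); first by rewrite leq_exp2r.
by rewrite -expnM ltn_exp2l /a; lia.
Qed.

Lemma bits_code_size_le c k : 2 <= k ->
  (bits c (k * k)).+1 * 2 ^ bits c (k * k) <= k ^ (6 * c).
Proof.
move=> k_ge2; set B := bits c (k * k); set t := trunc_log 2 (k * k).
have pow_t_le : 2 ^ t <= k * k by apply: trunc_logP => //; nia.
have pow_tS_le : 2 ^ t.+1 <= k ^ 3 by rewrite expnS; nia.
have pow_B_le : 2 ^ B <= k ^ (3 * c).
  by rewrite /B /bits -/t mulnC !expnM leq_exp2rW.
have -> : 6 * c = 3 * c + 3 * c by lia.
by rewrite expnD leq_mul // (leq_trans (ltn_expl _ (leqnn 2)) pow_B_le).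
Qed.

Lemma storage_count_lt_labelings c : exists N, forall k, N <= k ->
  ((bits c (k * k)).+1 * 2 ^ bits c (k * k)) ^ 2 *
  ((bits c (k * k)).+1 * 2 ^ bits c (k * k)) ^ k * k`! < (k.-1)`! ^ k.
Proof.
exists (4 * (12 * c) + 8) => k k_ge.
set M := (bits c (k * k)).+1 * _.
have k_ge2 : 2 <= k by lia.
have M_le : M <= k ^ (6 * c) by apply: bits_code_size_le.
apply: (@leq_ltn_trans ((k ^ (6 * c)) ^ k * (k ^ (6 * c)) ^ k * k ^ k)).
  have M2_le : M ^ 2 <= (k ^ (6 * c)) ^ k.
    apply: leq_trans (leq_exp2rW 2 M_le) (leq_pexp2l _ k_ge2).
    by rewrite expn_gt0 ltnW.
  by rewrite !leq_mul ?fact_leq_expn ?leq_exp2rW.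
rewrite -2!expnMn ltn_exp2r; last by lia.
by rewrite -expnD -expnSr; apply: expn_lt_fact_predn; lia.
Qed.

Theorem lemma1 :
  forall c : nat, exists N : nat, forall k : nat, N <= k ->
    ~ exists F : port_labeling k -> config k, constructs_map (bits c (k * k)) F.
Proof.
move=> c; have [N count_lt] := storage_count_lt_labelings c.
exists N => k k_ge [F F_map].
have := card_le_constructs_map F_map (@perm_labeling_valid k) (@perm_labeling_inj k).
by rewrite card_ffun card_Sn card_ord leqNgt count_lt.
Qed.
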